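(* There exist constants $K_1,K_2$ such that for every $\varepsilon>0$, $$\sum_{n\le x}\frac{1}{\beta(n)}=K_1\log x+K_2+O\!\left(x^{-1+\varepsilon}\right)\qquad (x\to\infty),$$ where $K_1=\prod_p\left(1-\frac1p\right)\left(1+\sum_{a=1}^{\infty}\frac{1}{\beta(p^a)}\right)$, the product being over all primes.
   Context: $\beta$ is the multiplicative arithmetic function with $\beta(1)=1$ and $\beta(p^a)=\frac{p^{a+1}+(-1)^a}{p+1}$ for every prime power $p^a$ ($a\ge1$); equivalently $\beta(n)=\sum_{d\mid n}d\,\lambda(n/d)$ with $\lambda$ the Liouville function. *)

From mathcomp Require Import all_boot.
From Stdlib Require Import Reals.

Definition beta_pp (p a : nat) : R :=
  Rdiv (Rplus (pow (INR p) (a + 1)) (pow (Ropp R1) a)) (Rplus (INR p) R1).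

Definition beta (n : nat) : R :=
  foldr (fun p acc => Rmult (beta_pp p (logn p n)) acc) R1 (primes n).

Definition sum_inv_beta (N : nat) : R :=
  foldr (fun n acc => Rplus (Rinv (beta n)) acc) R0 (iota 1 N).

Definition partial_euler_prod (f : nat -> R) (N : nat) : R :=
  foldr (fun p acc => Rmult (Rmult (Rminus R1 (Rinv (INR p))) (Rplus R1 (f p))) acc)
        R1 [seq p <- iota 0 N | prime p].

From HB Require Import structures.
From Stdlib Require Import Reals Lra Lia.
From mathcomp Require Import all_boot zify.
Open Scope R_scope.

(* Write n/beta(n) = sum_{d | n} g(d) (Moebius inversion of the
   multiplicative function n/beta(n)); then g is multiplicative with
   |g(p^a)| <= 6/p^a, so sum_d |g(d)| d^-s converges for every s > 0.
   Exchanging summations,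
     sum_{n <= N} 1/beta(n) = sum_{d <= N} (g(d)/d) H(N/d),
   where H is the harmonic sum.  Inserting H(M) = log M + gamma + O(1/M)
   gives the main term (log x + gamma) K1 - sum_d g(d) log d / d, with
   K1 = sum_d g(d)/d; the error terms and the tails of both series are
   O(x^(-1+eps)) by the bound on sum_d |g(d)| d^-s.  Finally K1 is
   identified with the Euler product: the local factor at p of
   sum_d g(d)/d equals (1 - 1/p)(1 + sum_{a >= 1} 1/beta(p^a)). *)

HB.instance Definition _ := Monoid.isComLaw.Build R 0 Rplus
  (fun x y z => esym (Rplus_assoc x y z)) Rplus_comm Rplus_0_l.
HB.instance Definition _ := Monoid.isComLaw.Build R 1 Rmult
  (fun x y z => esym (Rmult_assoc x y z)) Rmult_comm Rmult_1_l.
HB.instance Definition _ := Monoid.isMulLaw.Build R 0 Rmult Rmult_0_l Rmult_0_r.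
HB.instance Definition _ := Monoid.isAddLaw.Build R Rmult Rplus
  Rmult_plus_distr_r Rmult_plus_distr_l.

Notation "\rsum_ ( i <- r ) F" := (\big[Rplus/0]_(i <- r) F)
  (at level 41, F at level 41, i, r at level 50).
Notation "\rprod_ ( i <- r ) F" := (\big[Rmult/1]_(i <- r) F)
  (at level 36, F at level 36, i, r at level 50).

(* Unfolding a big operator exposes the monoid carriers; fold them back to
   Rplus / Rmult so that ring, lra and the Reals lemmas apply. *)
Ltac fold_R := rewrite -?[@Monoid.Law.sort _ 0 _]/Rplus
  -?[@Monoid.Law.sort _ 1 _]/Rmult -?[@Monoid.ComLaw.sort _ 0 _]/Rplus
  -?[@Monoid.ComLaw.sort _ 1 _]/Rmult.

Lemma sum_le (s : seq nat) F G : (forall i, i \in s -> F i <= G i) ->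
  \rsum_(i <- s) F i <= \rsum_(i <- s) G i.
Proof.
elim: s => [|x s IH] h; first by rewrite !big_nil; lra.
rewrite !big_cons; fold_R; apply: Rplus_le_compat; first by apply: h; rewrite mem_head.
by apply: IH => i hi; apply: h; rewrite in_cons hi orbT.
Qed.

Lemma sum_nonneg (s : seq nat) F : (forall i, i \in s -> 0 <= F i) ->
  0 <= \rsum_(i <- s) F i.
Proof. by move=> h; have := sum_le s (fun _ => 0) F h; rewrite big1_eq. Qed.

Lemma sum_abs (s : seq nat) F :
  Rabs (\rsum_(i <- s) F i) <= \rsum_(i <- s) Rabs (F i).
Proof.
elim: s => [|x s IH]; first by rewrite !big_nil Rabs_R0; lra.
rewrite !big_cons; fold_R; apply: Rle_trans; first exact: Rabs_triang.
lra.
Qed.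

Lemma sum_sub (s : seq nat) F G :
  \rsum_(i <- s) (F i - G i) = \rsum_(i <- s) F i - \rsum_(i <- s) G i.
Proof.
elim: s => [|x s IH]; first by rewrite !big_nil; ring.
by rewrite !big_cons; fold_R; rewrite IH; ring.
Qed.

Lemma sum_sub_le (s t : seq nat) F : uniq s -> uniq t -> {subset s <= t} ->
  (forall i, i \in t -> 0 <= F i) -> \rsum_(i <- s) F i <= \rsum_(i <- t) F i.
Proof.
move=> us ut st h.
have pe : perm_eq t ([seq i <- t | i \in s] ++ [seq i <- t | i \notin s]).
  by rewrite perm_sym perm_filterC.
have pe2 : perm_eq s [seq i <- t | i \in s].
  apply: uniq_perm => //; first by rewrite filter_uniq.
  by move=> i; rewrite mem_filter; apply/idP/idP => [hi|/andP[] //]; rewrite hi st.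
rewrite (perm_big _ pe) big_cat (perm_big _ pe2); fold_R.
have : 0 <= \rsum_(i <- [seq i <- t | i \notin s]) F i.
  by apply: sum_nonneg => i; rewrite mem_filter => /andP[_]; exact: h.
lra.
Qed.

Lemma prod_le (s : seq nat) F G : (forall i, i \in s -> 0 <= F i <= G i) ->
  \rprod_(i <- s) F i <= \rprod_(i <- s) G i.
Proof.
suff : (forall i, i \in s -> 0 <= F i <= G i) ->
  0 <= \rprod_(i <- s) F i <= \rprod_(i <- s) G i by move=> h /h [].
elim: s => [|x s IH] h; first by rewrite !big_nil; lra.
rewrite !big_cons; fold_R.
have [h1 h2] := h x (mem_head _ _).
have [h3 h4] := IH (fun i hi => h i ltac:(by rewrite in_cons hi orbT)).
by split; [exact: Rmult_le_pos | apply: Rmult_le_compat].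
Qed.

Lemma exp_sum (s : seq nat) F :
  exp (\rsum_(i <- s) F i) = \rprod_(i <- s) exp (F i).
Proof.
elim: s => [|x s IH]; first by rewrite !big_nil exp_0.
by rewrite !big_cons; fold_R; rewrite exp_plus IH.
Qed.

Definition mult (h : nat -> nat -> R) (n : nat) : R :=
  \rprod_(p <- primes n) h p (logn p n).

Definition multiplicative (F : nat -> R) :=
  F 1%N = 1 /\ forall m n, coprime m n -> F (m * n)%N = F m * F n.

Lemma beta_mult n : beta n = mult beta_pp n.
Proof. by rewrite /beta /mult unlock. Qed.

Lemma coprime0l n : coprime 0 n -> n = 1%N.
Proof. by rewrite /coprime gcd0n => /eqP. Qed.

Lemma coprime0r m : coprime m 0 -> m = 1%N.
Proof. by rewrite /coprime gcdn0 => /eqP. Qed.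

Lemma mult_multiplicative h : multiplicative (mult h).
Proof.
split; first by rewrite /mult /= big_nil.
move=> m n cop.
have [m0|m0] := posnP m.
  by move: cop; rewrite m0 => /coprime0l ->; rewrite {3}/mult /= big_nil Rmult_1_r.
have [n0|n0] := posnP n.
  by move: cop; rewrite n0 => /coprime0r ->; rewrite {2}/mult /= big_nil Rmult_1_l.
have disj p : p \in primes m -> p \notin primes n.
  rewrite !mem_primes => /and3P[pp _ pm]; apply/negP => /and3P[_ _ pn].
  have : p %| gcdn m n by rewrite dvdn_gcd pm pn.
  by move: cop; rewrite /coprime => /eqP ->; rewrite dvdn1 => /eqP p1; move: pp; rewrite p1.
have pe : perm_eq (primes (m * n)) (primes m ++ primes n).
  apply: uniq_perm; first exact: primes_uniq.
    rewrite cat_uniq !primes_uniq /= andbT; apply/hasPn => p pn; apply/negP => pm.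
    by move: (disj p pm); rewrite pn.
  by move=> p; rewrite primesM // mem_cat.
rewrite /mult (perm_big _ pe) big_cat /=; congr Rmult.
  apply: eq_big_seq => p pm; rewrite lognM // (@logn_coprime p n) ?addn0 //.
  rewrite prime_coprime; last by move: pm; rewrite mem_primes => /andP[].
  apply/negP => pn; move: (disj p pm); rewrite mem_primes pn n0 /=.
  by move: pm; rewrite mem_primes => /andP[->].
apply: eq_big_seq => p pn; rewrite lognM // (@logn_coprime p m) ?add0n //.
rewrite prime_coprime; last by move: pn; rewrite mem_primes => /andP[].
apply/negP => pm; have : p \in primes m.
  by rewrite mem_primes pm m0; move: pn; rewrite mem_primes => /andP[->].
by move/disj; rewrite pn.
Qed.

Lemma mult_pexp h p k : prime p -> (0 < k)%N -> mult h (p ^ k) = h p k.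
Proof.
move=> pp k0; rewrite /mult primesX // primes_prime // big_cons big_nil pfactorK //.
by rewrite Rmult_1_r.
Qed.

Lemma mult_mul F G : multiplicative F -> multiplicative G ->
  multiplicative (fun d => F d * G d).
Proof.
move=> [F1 FM] [G1 GM]; split; first by rewrite F1 G1; ring.
by move=> m n c; rewrite FM // GM //; ring.
Qed.

Lemma mult_abs F : multiplicative F -> multiplicative (fun d => Rabs (F d)).
Proof.
move=> [F1 FM]; split; first by rewrite F1 Rabs_R1.
by move=> m n c; rewrite FM // Rabs_mult.
Qed.

Lemma coprime_pexp_prod p e (s : seq nat) (f : nat -> nat) :
  prime p -> all prime s -> p \notin s ->
  coprime (p ^ e) (\prod_(q <- s) q ^ f q).
Proof.
move=> pp; move: e; elim: s => [|q s IH] /= e; first by rewrite big_nil coprimen1.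
move=> /andP[pq ps]; rewrite in_cons negb_or => /andP[npq nps].
rewrite big_cons coprimeMr IH // andbT.
case: e => [|e]; first by rewrite coprime1n.
case: (f q) => [|k]; first by rewrite coprimen1.
by rewrite coprime_pexpl // coprime_pexpr // prime_coprime // dvdn_prime2.
Qed.

Lemma mult_prod_pp F (s : seq nat) (e : nat -> nat) : multiplicative F ->
  uniq s -> all prime s ->
  F (\prod_(p <- s) p ^ e p)%N = \rprod_(p <- s) F (p ^ e p)%N.
Proof.
move=> [F1 FM]; elim: s => [|p s IH] /=; first by rewrite !big_nil.
move=> /andP[ps us] /andP[pp aps].
by rewrite !big_cons FM ?IH //; exact: coprime_pexp_prod.
Qed.

Lemma all_prime_primes n : all prime (primes n).
Proof. by apply/allP => p; rewrite mem_primes => /andP[]. Qed.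

Lemma mult_decomp F n : multiplicative F -> (0 < n)%N ->
  F n = \rprod_(p <- primes n) F (p ^ logn p n)%N.
Proof.
move=> FM n0; rewrite {1}(prod_prime_decomp n0) prime_decompE big_map.
by rewrite mult_prod_pp // ?primes_uniq ?all_prime_primes.
Qed.

Lemma mult_eq F G : multiplicative F -> multiplicative G ->
  (forall p k, prime p -> (0 < k)%N -> F (p ^ k)%N = G (p ^ k)%N) ->
  forall n, (0 < n)%N -> F n = G n.
Proof.
move=> FM GM FG n n0; rewrite (mult_decomp _ _ FM n0) (mult_decomp _ _ GM n0).
apply: eq_big_seq => p; rewrite -logn_gt0 => lp; apply: FG => //.
by move: lp; rewrite logn_gt0 mem_primes => /andP[].
Qed.

Definition Dsum (F : nat -> R) (n : nat) : R := \rsum_(d <- divisors n) F d.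

Lemma divisorsM m n : (0 < m)%N -> (0 < n)%N -> coprime m n ->
  perm_eq (divisors (m * n))
          [seq (d1 * d2)%N | d1 <- divisors m, d2 <- divisors n].
Proof.
move=> m0 n0 cop; have mn0 : (0 < m * n)%N by rewrite muln_gt0 m0 n0.
apply: uniq_perm; first exact: divisors_uniq.
  apply: allpairs_uniq; try exact: divisors_uniq.
  move=> [d1 d2] [e1 e2] /allpairsP[[x1 x2] [/= h1 h2 [-> ->]]]
    /allpairsP[[y1 y2] [/= k1 k2 [-> ->]]] /= eq.
  rewrite -!dvdn_divisors // in h1 h2 k1 k2.
  have gcd_l a b : a %| m -> b %| n -> gcdn m (a * b) = a.
    move=> am bn; rewrite Gauss_gcdl; first exact/gcdn_idPr.
    exact: coprime_dvdr bn cop.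
  have gcd_r a b : a %| m -> b %| n -> gcdn n (a * b) = b.
    move=> am bn; rewrite Gauss_gcdr; first exact/gcdn_idPr.
    by rewrite coprime_sym; exact: coprime_dvdl am cop.
  by rewrite -(gcd_l x1 x2) // eq gcd_l // -(gcd_r x1 x2) // eq gcd_r.
move=> d; apply/idP/idP.
  rewrite -dvdn_divisors // => dmn; apply/allpairsP.
  exists (gcdn d m, gcdn d n); rewrite /= -!dvdn_divisors // !dvdn_gcdr; split => //.
  have cg : coprime (gcdn d m) (gcdn d n).
    apply: coprime_dvdl (dvdn_gcdr d m) _; exact: coprime_dvdr (dvdn_gcdr d n) cop.
  apply/eqP; rewrite eqn_dvd; apply/andP; split.
    by rewrite muln_gcdl dvdn_gcd dvdn_mulr //= muln_gcdr dvdn_gcd dvdn_mull.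
  by rewrite Gauss_dvd // !dvdn_gcdl.
move=> /allpairsP[[x1 x2] [/= h1 h2 ->]]; rewrite -dvdn_divisors //.
rewrite -!dvdn_divisors // in h1 h2; exact: dvdn_mul.
Qed.

Lemma Dsum_mult F : multiplicative F -> multiplicative (Dsum F).
Proof.
have D1 : Dsum F 1 = F 1%N by rewrite /Dsum (_ : divisors 1 = [:: 1%N]) // big_seq1.
move=> [F1 FM]; split; first by rewrite D1.
move=> m n cop.
have [m0|m0] := posnP m.
  by move: cop; rewrite m0 => /coprime0l ->; rewrite D1 F1 Rmult_1_r.
have [n0|n0] := posnP n.
  by move: cop; rewrite n0 => /coprime0r ->; rewrite D1 F1 Rmult_1_l.
rewrite /Dsum (perm_big _ (divisorsM _ _ m0 n0 cop)) big_allpairs_dep big_distrl /=.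
apply: eq_big_seq => d1 h1; rewrite big_distrr /=; apply: eq_big_seq => d2 h2.
rewrite FM //; rewrite -!dvdn_divisors // in h1 h2.
apply: coprime_dvdl h1 _; exact: coprime_dvdr h2 cop.
Qed.

Lemma Dsum_pexp F p k : prime p ->
  Dsum F (p ^ k)%N = \big[Rplus/0]_(0 <= j < k.+1) F (p ^ j)%N.
Proof.
move=> pp; rewrite /Dsum /index_iota subn0 -(big_map (expn p) xpredT).
apply: perm_big; apply: uniq_perm; first exact: divisors_uniq.
  by rewrite map_inj_uniq ?iota_uniq //; apply: expnI; exact: prime_gt1.
move=> d; rewrite -dvdn_divisors ?expn_gt0 ?prime_gt0 //.
apply/idP/idP.
  by case/(dvdn_pfactor _ _ pp) => j jk ->; apply: map_f; rewrite mem_iota /=; lia.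
case/mapP => j; rewrite mem_iota => /andP[_ jk] ->; apply/(dvdn_pfactor _ _ pp).
by exists j.
Qed.

Lemma Rabs_le_inv a b : Rabs a <= b -> - b <= a <= b.
Proof.
by move=> h; split; [have := Rle_abs (- a); rewrite Rabs_Ropp | have := Rle_abs a]; lra.
Qed.

Lemma INR_expn p a : INR (p ^ a)%N = INR p ^ a.
Proof. by elim: a => [|a IH]; rewrite ?expn0 // expnS mult_INR IH. Qed.

Lemma neg1pow a : (-1) ^ a = 1 \/ (-1) ^ a = -1.
Proof. elim: a => [|a [IH|IH]] /=; [left | right | left]; rewrite ?IH; lra. Qed.

Lemma pow_ge_base x a : 1 <= x -> (0 < a)%N -> x <= x ^ a.
Proof.
move=> x1; case: a => // a _; elim: a => [|a IH]; first by rewrite /=; lra.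
rewrite /= in IH *; have : 1 <= x * x ^ a by have := pow_le x a ltac:(lra); nra.
nra.
Qed.

Lemma pow_ge1 x a : 1 <= x -> 1 <= x ^ a.
Proof. by move=> x1; elim: a => [|a IH] /=; nra. Qed.

Lemma inv_pow_le x a b : 1 <= x -> (a <= b)%N -> / x ^ b <= / x ^ a.
Proof.
move=> x1 ab; apply: Rinv_le_contravar; first by have := pow_ge1 x a x1; lra.
rewrite -(subnK ab) pow_add; have := pow_ge1 x (b - a) x1; have := pow_ge1 x a x1; nra.
Qed.

Lemma div_nonneg a b : 0 <= a -> 0 < b -> 0 <= a / b.
Proof. by move=> ha hb; apply: Rmult_le_pos => //; left; exact: Rinv_0_lt_compat. Qed.

(* n/beta(n) at a prime power, and the local factor of the function g with
   n/beta(n) = sum_{d | n} g(d): g(p^a) = (p^a/beta(p^a)) - (p^(a-1)/beta(p^(a-1))). *)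
Definition ratio_pp (p a : nat) : R := INR (p ^ a) / beta_pp p a.
Definition g_pp (p a : nat) : R := ratio_pp p a - ratio_pp p a.-1.

Lemma beta_ppE p a : beta_pp p a = (INR p ^ a.+1 + (-1) ^ a) / (INR p + 1).
Proof. by rewrite /beta_pp addn1. Qed.

Section LocalFactors.
Context {p : nat} (p_prime : prime p).

Lemma prime_ge2 : 2 <= INR p.
Proof. by have := prime_gt1 p_prime; move/leP => h; apply: (le_INR 2); lia. Qed.

Lemma beta_pp_pos a : 0 < beta_pp p a.
Proof.
have P2 := prime_ge2; rewrite beta_ppE.
have : 2 <= INR p ^ a.+1 by have := pow_ge_base (INR p) a.+1 ltac:(lra) isT; lra.
by case: (neg1pow a) => -> h; apply: Rdiv_lt_0_compat; lra.
Qed.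

Lemma ratio_pp0 : ratio_pp p 0 = 1.
Proof. by have := prime_ge2; rewrite /ratio_pp /beta_pp /= => h; field; lra. Qed.

(* p^a/beta(p^a) = (p+1)/p + O(p^-(a+1)): the two local factors nearly
   cancel in g(p^a). *)
Lemma ratio_pp_close a :
  Rabs (ratio_pp p a - (INR p + 1) / INR p) <= 3 / INR p ^ a.+1.
Proof.
have := prime_ge2; set P := INR p => P2.
have Q1 : P <= P ^ a.+1 by apply: pow_ge_base => //; lra.
have Qe : P ^ a.+1 = P * P ^ a by [].
have Pa : 1 <= P ^ a by apply: pow_ge1; lra.
rewrite /ratio_pp beta_ppE INR_expn -/P.
case: (neg1pow a) => ->.
  have -> : P ^ a / ((P ^ a.+1 + 1) / (P + 1)) - (P + 1) / P =
            - ((P + 1) / (P * (P ^ a.+1 + 1))) by rewrite Qe; field; nra.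
  rewrite Rabs_Ropp Rabs_right; last by apply: Rle_ge; apply: div_nonneg; nra.
  apply: (Rmult_le_reg_r (P * (P ^ a.+1 + 1) * P ^ a.+1)); first nra.
  have -> : (P + 1) / (P * (P ^ a.+1 + 1)) * (P * (P ^ a.+1 + 1) * P ^ a.+1) =
            (P + 1) * P ^ a.+1 by field; nra.
  have -> : 3 / P ^ a.+1 * (P * (P ^ a.+1 + 1) * P ^ a.+1) =
            3 * (P * (P ^ a.+1 + 1)) by field; nra.
  nra.
have -> : P ^ a / ((P ^ a.+1 + -1) / (P + 1)) - (P + 1) / P =
          (P + 1) / (P * (P ^ a.+1 - 1)) by rewrite Qe; field; split; nra.
rewrite Rabs_right; last by apply: Rle_ge; apply: div_nonneg; nra.
apply: (Rmult_le_reg_r (P * (P ^ a.+1 - 1) * P ^ a.+1)); first nra.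
have -> : (P + 1) / (P * (P ^ a.+1 - 1)) * (P * (P ^ a.+1 - 1) * P ^ a.+1) =
          (P + 1) * P ^ a.+1 by field; nra.
have -> : 3 / P ^ a.+1 * (P * (P ^ a.+1 - 1) * P ^ a.+1) =
          3 * (P * (P ^ a.+1 - 1)) by field; nra.
nra.
Qed.

Lemma ratio_pp_pos a : 0 < ratio_pp p a.
Proof.
rewrite /ratio_pp INR_expn; apply: Rdiv_lt_0_compat; last exact: beta_pp_pos.
by apply: pow_lt; have := prime_ge2; lra.
Qed.

Lemma ratio_pp_le3 a : ratio_pp p a <= 3.
Proof.
have P2 := prime_ge2; have /Rabs_le_inv [_ h] := ratio_pp_close a.
have : 3 / INR p ^ a.+1 <= 3 / 2.
  have := pow_ge_base (INR p) a.+1 ltac:(lra) isT => h2.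
  by apply: Rmult_le_compat_l; [lra | apply: Rinv_le_contravar; lra].
have : (INR p + 1) / INR p <= 3 / 2.
  by apply: (Rmult_le_reg_r (INR p)); [lra | rewrite /Rdiv Rmult_assoc Rinv_l; lra].
lra.
Qed.

Lemma g_pp_bound a : (0 < a)%N -> Rabs (g_pp p a) <= 6 / INR p ^ a.
Proof.
move=> a0; have P2 := prime_ge2.
have h1 := ratio_pp_close a; have h2 := ratio_pp_close a.-1.
rewrite prednK // in h2.
have h3 : 3 / INR p ^ a.+1 <= 3 / INR p ^ a.
  by apply: Rmult_le_compat_l; [lra | apply: inv_pow_le => //; lra].
rewrite /g_pp (_ : ratio_pp p a - ratio_pp p a.-1 =
  (ratio_pp p a - (INR p + 1) / INR p) - (ratio_pp p a.-1 - (INR p + 1) / INR p));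
  last ring.
apply: Rle_trans; first exact: Rabs_triang.
rewrite Rabs_Ropp; lra.
Qed.

End LocalFactors.

Definition ratio (n : nat) : R := INR n / beta n.
Definition gfun (n : nat) : R := mult g_pp n.

Lemma beta1 : beta 1 = 1.
Proof. by rewrite beta_mult /mult /= big_nil. Qed.

Lemma beta_pexp p k : prime p -> (0 < k)%N -> beta (p ^ k) = beta_pp p k.
Proof. by move=> pp k0; rewrite beta_mult mult_pexp. Qed.

Lemma ratio_mult : multiplicative ratio.
Proof.
split; first by rewrite /ratio beta1 /=; field.
move=> m n cop; have [_ bM] := mult_multiplicative beta_pp.
by rewrite /ratio !beta_mult bM // mult_INR /Rdiv Rinv_mult; ring.
Qed.

(* Both sides are multiplicative; on p^k the divisor sum of g telescopes. *)
Lemma ratio_Dsum n : (0 < n)%N -> ratio n = Dsum gfun n.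
Proof.
apply: mult_eq; [exact: ratio_mult | apply: Dsum_mult; exact: mult_multiplicative |].
move=> p k pp k0; rewrite Dsum_pexp // /ratio beta_pexp // -/(ratio_pp p k).
elim: k k0 => [//|k IH _]; rewrite big_nat_recr //=.
have [->|k0] := posnP k.
  rewrite big_nat1 /gfun expn0 (mult_pexp g_pp p 1 pp) // /mult /= big_nil.
  by rewrite /g_pp /= ratio_pp0 //; rewrite /ratio_pp /Rdiv; ring.
by rewrite -IH // /gfun mult_pexp // /g_pp /=; rewrite /ratio_pp /Rdiv; ring.
Qed.

Lemma inv_beta_pexp p a : prime p -> (0 < a)%N ->
  / beta (p ^ a)%N = ratio_pp p a / INR p ^ a.
Proof.
move=> pp a0; rewrite beta_pexp // /ratio_pp INR_expn.
have := beta_pp_pos pp a; have : 0 < INR p ^ a by apply: pow_lt; have := prime_ge2 pp; lra.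
by move=> h1 h2; field; lra.
Qed.

Lemma inv_beta_pexp_bound p a : prime p ->
  0 <= / beta (p ^ a.+1)%N <= 3 * (/ 2) ^ a.+1.
Proof.
move=> pp; have P2 := prime_ge2 pp; rewrite inv_beta_pexp // pow_inv.
have hf := ratio_pp_pos pp a.+1; have hf3 := ratio_pp_le3 pp a.+1.
have h2 : 0 < 2 ^ a.+1 by apply: pow_lt; lra.
have hP : 2 ^ a.+1 <= INR p ^ a.+1 by apply: pow_incr; lra.
split; first by left; apply: Rdiv_lt_0_compat => //; lra.
apply: Rle_trans (_ : 3 / INR p ^ a.+1 <= _).
  by apply: Rmult_le_compat_r; [left; apply: Rinv_0_lt_compat; lra | lra].
by apply: Rmult_le_compat_l; [lra | apply: Rinv_le_contravar; lra].
Qed.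

Lemma ln_le_sub1 y : 0 < y -> ln y <= y - 1.
Proof. by move=> y0; have := exp_ineq1_le (ln y); rewrite exp_ln //; lra. Qed.

Lemma ln_ge_1inv y : 0 < y -> 1 - / y <= ln y.
Proof.
by move=> y0; have := ln_le_sub1 (/ y) (Rinv_0_lt_compat _ y0); rewrite ln_Rinv //; lra.
Qed.

Lemma ln_succ_bounds y : 0 < y ->
  / (y + 1) <= ln (y + 1) - ln y <= / y.
Proof.
move=> y0; have q0 : 0 < (y + 1) / y by apply: Rdiv_lt_0_compat; lra.
have e : ln (y + 1) - ln y = ln ((y + 1) / y).
  by rewrite /Rdiv ln_mult ?ln_Rinv //; try lra; apply: Rinv_0_lt_compat.
rewrite e; have := ln_le_sub1 _ q0; have := ln_ge_1inv _ q0.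
have -> : 1 - / ((y + 1) / y) = / (y + 1) by field; lra.
have -> : (y + 1) / y - 1 = / y by field; lra.
lra.
Qed.

Lemma ln_le_mono x y : 0 < x -> x <= y -> ln x <= ln y.
Proof. by move=> x0 [xy|->]; [left; apply: ln_increasing | lra]. Qed.

Lemma exp_le_mono x y : x <= y -> exp x <= exp y.
Proof. by move=> [h|->]; [left; exact: exp_increasing | lra]. Qed.

Lemma Rpower_pos x y : 0 < Rpower x y.
Proof. exact: exp_pos. Qed.

Lemma Rpower_1base s : Rpower 1 s = 1.
Proof. by rewrite /Rpower ln_1 Rmult_0_r exp_0. Qed.

Lemma Rpower_ge1 x s : 1 <= x -> 0 <= s -> 1 <= Rpower x s.
Proof. by move=> x1 s0; rewrite -(Rpower_O x); [apply: Rle_Rpower | lra]. Qed.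

Lemma Rpower_pow_base x j s : 0 < x -> Rpower (x ^ j) s = Rpower x s ^ j.
Proof.
move=> x0; elim: j => [|j IH] /=; first exact: Rpower_1base.
by rewrite -Rpower_mult_distr ?IH //; apply: pow_lt.
Qed.

Lemma Rpower_neg_anti k x y : 0 <= k -> 0 < x -> x <= y ->
  Rpower y (- k) <= Rpower x (- k).
Proof.
move=> k0 x0 xy; rewrite !Rpower_Ropp; apply: Rinv_le_contravar; first exact: Rpower_pos.
by apply: Rle_Rpower_l => //; lra.
Qed.

Lemma Rpower_sub1 x s : 0 < x -> Rpower x (s - 1) = Rpower x s / x.
Proof.
by move=> x0; rewrite /Rminus Rpower_plus Rpower_Ropp Rpower_1.
Qed.

Lemma ln_le_Rpower s y : 0 < s -> 0 < y -> ln y <= Rpower y s / s.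
Proof.
move=> s0 y0; have := ln_le_sub1 (Rpower y s) (Rpower_pos y s).
rewrite ln_Rpower => h; apply: (Rmult_le_reg_l s) => //.
have -> : s * (Rpower y s / s) = Rpower y s by field; lra.
lra.
Qed.

Lemma Rpower_small k d : 0 < k -> 0 < d ->
  exists N, forall n, (N <= n)%N -> Rpower (INR n.+1) (- k) < d.
Proof.
move=> k0 d0; have [N hN] := INR_unbounded (Rpower d (- / k)).
exists N => n nN.
have hy : Rpower d (- / k) < INR n.+1 by apply: Rlt_le_trans hN _; apply: le_INR; lia.
have : ln (Rpower d (- / k)) < ln (INR n.+1) by apply: ln_increasing => //; exact: Rpower_pos.
rewrite ln_Rpower => h; rewrite -(exp_ln d) //; apply: exp_increasing.
have : - k * ln (INR n.+1) < - k * (- / k * ln d) by apply: Rmult_lt_gt_compat_neg_l; lra.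
by have -> : - k * (- / k * ln d) = ln d by field; lra.
Qed.

Lemma lim_le (u : nat -> R) l c N0 :
  Un_cv u l -> (forall n, (N0 <= n)%N -> u n <= c) -> l <= c.
Proof.
move=> cv h; apply: Rnot_lt_le => lc.
have [N hN] := cv (l - c) ltac:(lra).
have := hN (maxn N N0) ltac:(apply/leP; lia).
have := h (maxn N N0) ltac:(lia).
rewrite /R_dist => h1 /Rabs_def2; lra.
Qed.

Lemma lim_ge (u : nat -> R) l c N0 :
  Un_cv u l -> (forall n, (N0 <= n)%N -> c <= u n) -> c <= l.
Proof.
move=> cv h; apply: Ropp_le_cancel; apply: (lim_le (fun n => - u n) _ _ N0).
  exact: CV_opp.
by move=> n /h; lra.
Qed.

Lemma lim_abs_le (u : nat -> R) l a c N0 :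
  Un_cv u l -> (forall n, (N0 <= n)%N -> Rabs (u n - a) <= c) -> Rabs (l - a) <= c.
Proof.
move=> cv h; apply: Rabs_le; split.
  have : - c + a <= l; last lra.
  by apply: (lim_ge u _ _ N0) => // n /h /Rabs_le_inv; lra.
have : l <= c + a; last lra.
by apply: (lim_le u _ _ N0) => // n /h /Rabs_le_inv; lra.
Qed.

Lemma cv_const c : Un_cv (fun _ => c) c.
Proof. by move=> e e0; exists 0%N => n _; rewrite /R_dist Rminus_diag Rabs_R0. Qed.

Lemma cv_ext (u v : nat -> R) l : (forall n, u n = v n) -> Un_cv u l -> Un_cv v l.
Proof.
by move=> e cv eps e0; have [N hN] := cv eps e0; exists N => n nN; rewrite -e; exact: hN.
Qed.

Lemma prod_cv (s : seq nat) (u : nat -> nat -> R) (l : nat -> R) :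
  (forall p, p \in s -> Un_cv (u p) (l p)) ->
  Un_cv (fun K => \rprod_(p <- s) u p K) (\rprod_(p <- s) l p).
Proof.
elim: s => [|x s IH] h.
  by rewrite big_nil; apply: cv_ext (cv_const 1) => n; rewrite big_nil.
rewrite big_cons; fold_R.
apply: cv_ext (CV_mult _ _ _ _ (h x (mem_head _ _)) (IH _)).
  by move=> n; rewrite big_cons; fold_R.
by move=> p hp; apply: h; rewrite in_cons hp orbT.
Qed.

Section SeriesTail.
Variables (t E : nat -> R) (B c k : R).
Hypotheses (k_pos : 0 < k) (c_nonneg : 0 <= c) (E_nonneg : forall d, 0 <= E d).
Hypothesis E_bounded : forall N, \rsum_(d <- iota 1 N) E d <= B.
Hypothesis t_dominated :
  forall d, (0 < d)%N -> Rabs (t d) <= c * E d * Rpower (INR d) (- k).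

Let S N := \rsum_(d <- iota 1 N) t d.

Lemma partial_bound_nonneg : 0 <= B.
Proof. by have := E_bounded 0; rewrite big_nil. Qed.

Lemma partial_sum_diff N M : (N <= M)%N ->
  Rabs (S M - S N) <= c * B * Rpower (INR N.+1) (- k).
Proof.
move=> NM; have sp : iota 1 M = iota 1 N ++ iota N.+1 (M - N).
  by rewrite -{1}(subnKC NM) iotaD add1n.
rewrite /S sp big_cat; fold_R.
have -> : forall a b, a + b - a = b by move=> a b; ring.
apply: Rle_trans; first exact: sum_abs.
apply: Rle_trans.
  apply: (sum_le _ _ (fun d => c * E d * Rpower (INR N.+1) (- k))) => d.
  rewrite mem_iota => /andP[d1 _]; apply: Rle_trans; first by apply: t_dominated; lia.
  apply: Rmult_le_compat_l; first by apply: Rmult_le_pos.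
  by apply: Rpower_neg_anti; [lra | apply: lt_0_INR; lia | apply: le_INR; lia].
rewrite -big_distrl -big_distrr.
have hr := Rpower_pos (INR N.+1) (- k).
apply: Rmult_le_compat_r; first lra; apply: Rmult_le_compat_l => //.
apply: Rle_trans (E_bounded M); rewrite sp big_cat; fold_R.
have : 0 <= \rsum_(d <- iota 1 N) E d by apply: sum_nonneg.
lra.
Qed.

Lemma partial_sums_cauchy : Cauchy_crit S.
Proof.
move=> eps e0; have B0 := partial_bound_nonneg; have hcb : 0 <= c * B by apply: Rmult_le_pos.
have [N hN] := Rpower_small k (eps / (c * B + 1)) k_pos
  ltac:(apply: Rdiv_lt_0_compat; lra).
have key a b : (N <= a)%N -> (a <= b)%N -> Rabs (S b - S a) < eps.
  move=> aN ab; apply: Rle_lt_trans; first exact: partial_sum_diff.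
  apply: Rle_lt_trans (_ : c * B * (eps / (c * B + 1)) < eps).
    by apply: Rmult_le_compat_l => //; have := hN a aN; lra.
  apply: (Rmult_lt_reg_r (c * B + 1)); first lra.
  have -> : c * B * (eps / (c * B + 1)) * (c * B + 1) = c * B * eps by field; lra.
  nra.
exists N => n m /leP nN /leP mN; rewrite /R_dist.
case: (leqP n m) => h; first by rewrite Rabs_minus_sym; exact: key.
exact: key (ltnW h).
Qed.

Lemma convergent_with_tail :
  {l | Un_cv S l /\
       forall N y, 0 < y -> y <= INR N.+1 ->
         Rabs (l - S N) <= c * B * Rpower y (- k)}.
Proof.
have [l cv] := R_complete _ partial_sums_cauchy.
exists l; split => // N y y0 yN.
apply: (lim_abs_le _ _ _ _ N cv) => M NM.
apply: Rle_trans; first exact: partial_sum_diff.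
apply: Rmult_le_compat_l; first by apply: Rmult_le_pos => //; exact: partial_bound_nonneg.
by apply: Rpower_neg_anti => //; lra.
Qed.

End SeriesTail.

Definition harmonic (M : nat) : R := \rsum_(m <- iota 1 M) / INR m.

Lemma iota_1_S N : iota 1 N.+1 = iota 1 N ++ [:: N.+1].
Proof. by rewrite -[N.+1]addn1 iotaD /= add1n addn1. Qed.

Lemma harmonic_S M : harmonic M.+1 = harmonic M + / INR M.+1.
Proof. by rewrite /harmonic iota_1_S big_cat big_seq1. Qed.

Lemma harmonic_1 : harmonic 1 = 1.
Proof. by rewrite /harmonic big_seq1 Rinv_1. Qed.

Lemma INR_S_pos n : 0 < INR n.+1.
Proof. by apply: lt_0_INR; lia. Qed.

Definition harm_upper (n : nat) : R := harmonic n.+1 - ln (INR n.+1).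
Definition harm_lower (n : nat) : R := harmonic n.+1 - ln (INR n.+2).

Lemma harm_upper_decr : Un_decreasing harm_upper.
Proof.
move=> n; rewrite /harm_upper harmonic_S (S_INR n.+1).
by have := ln_succ_bounds _ (INR_S_pos n); rewrite -S_INR; lra.
Qed.

Lemma harm_lower_incr : Un_growing harm_lower.
Proof.
move=> n; rewrite /harm_lower (harmonic_S n.+1) (S_INR n.+2).
by have := ln_succ_bounds _ (INR_S_pos n.+1); rewrite -S_INR; lra.
Qed.

Lemma harm_lower_le_upper n : harm_lower n <= harm_upper n.
Proof.
rewrite /harm_lower /harm_upper (S_INR n.+1).
have := ln_succ_bounds _ (INR_S_pos n).
suff : 0 < / (INR n.+1 + 1) by lra.
by apply: Rinv_0_lt_compat; have := INR_S_pos n; lra.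
Qed.

(* Euler's constant, as the common limit of the two monotone sequences. *)
Lemma euler_gamma :
  {g : R | forall M, (0 < M)%N -> Rabs (harmonic M - ln (INR M) - g) <= / INR M}.
Proof.
have [g cv] : {l | Un_cv harm_lower l}.
  apply: growing_cv; first exact: harm_lower_incr.
  exists (harm_upper 0) => x [i ->].
  have := harm_lower_le_upper i; have := decreasing_prop _ _ _ harm_upper_decr (Nat.le_0_l i).
  lra.
exists g => M M0.
have hV : harm_lower M.-1 <= g := growing_ineq _ _ harm_lower_incr cv M.-1.
have hU : g <= harm_upper M.-1.
  apply: (lim_le _ _ _ M.-1 cv) => n /leP nM.
  have := harm_lower_le_upper n; have := decreasing_prop _ _ _ harm_upper_decr nM.
  lra.
move: hV hU; rewrite /harm_lower /harm_upper prednK // (S_INR M).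
have := ln_succ_bounds (INR M) ltac:(apply: lt_0_INR; lia).
by move=> h1 h2 h3; apply: Rabs_le; lra.
Qed.

(* Absolute convergence: for s > 0 the partial sums of
   sum_d |g(d)| d^-s are bounded by exp(12/s), via the Euler product
   prod_p (1 + 12 p^(-1-s)) <= exp (12 sum_p p^(-1-s)). *)
Definition abs_g_scaled (s : R) (d : nat) : R := Rabs (gfun d) * Rpower (INR d) (- s).
Definition abs_g_bound (s : R) : R := exp (12 / s).

Lemma Rpower_mult_fun s : multiplicative (fun d => Rpower (INR d) s).
Proof.
split; first by rewrite Rpower_1base.
move=> m n c; rewrite mult_INR.
have [m0|m0] := posnP m.
  by move: c; rewrite m0 => /coprime0l ->; rewrite /= Rmult_1_r Rpower_1base Rmult_1_r.
have [n0|n0] := posnP n.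
  by move: c; rewrite n0 => /coprime0r ->; rewrite /= Rmult_1_l Rpower_1base Rmult_1_l.
by rewrite Rpower_mult_distr //; apply: lt_0_INR; lia.
Qed.

Lemma abs_g_scaled_mult s : multiplicative (abs_g_scaled s).
Proof.
apply: mult_mul; last exact: Rpower_mult_fun.
by apply: mult_abs; exact: mult_multiplicative.
Qed.

Lemma abs_g_scaled_nonneg s d : 0 <= abs_g_scaled s d.
Proof. by apply: Rmult_le_pos; [exact: Rabs_pos | left; exact: Rpower_pos]. Qed.

Lemma abs_g_scaled_inv s d : (0 < d)%N ->
  Rabs (gfun d) = abs_g_scaled s d * Rpower (INR d) s.
Proof.
move=> d0; rewrite /abs_g_scaled Rmult_assoc -Rpower_plus Rplus_opp_l Rpower_O; first ring.
by apply: lt_0_INR; lia.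
Qed.

(* sum_{1 <= j <= k} q^j <= 2q for 0 <= q <= 1/2 (in a form suited to induction). *)
Lemma geom_bound q k : 0 <= q <= 1/2 ->
  \big[Rplus/0]_(1 <= j < k.+1) q ^ j <= 2 * q - 2 * q ^ k.+1.
Proof.
move=> hq; elim: k => [|k IH]; first by rewrite big_geq //=; lra.
rewrite big_nat_recr //=; fold_R.
have h1 : 0 <= q ^ k by apply: pow_le; lra.
have h2 : 0 <= q * q ^ k * (1 - 2 * q).
  by apply: Rmult_le_pos; [apply: Rmult_le_pos; lra | lra].
by rewrite /= in IH *; nra.
Qed.

Lemma abs_g_local_bound s p k : 0 < s -> prime p ->
  Dsum (abs_g_scaled s) (p ^ k)%N <= 1 + 12 * Rpower (INR p) (-1 - s).
Proof.
move=> s0 pp; have P2 := prime_ge2 pp.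
rewrite Dsum_pexp // big_ltn //; fold_R.
have -> : abs_g_scaled s (p ^ 0)%N = 1.
  by rewrite expn0 /abs_g_scaled /gfun /mult /= big_nil Rabs_R1 Rpower_1base; ring.
set q := Rpower (INR p) (-1 - s).
have hq : 0 <= q <= 1 / 2.
  split; first by left; exact: Rpower_pos.
  have : q <= Rpower (INR p) (-1) by apply: Rle_Rpower; lra.
  rewrite Rpower_Ropp Rpower_1; last lra.
  by move=> h; apply: Rle_trans h _; have := Rinv_le_contravar 2 (INR p) ltac:(lra) P2; lra.
have : \big[Rplus/0]_(1 <= j < k.+1) abs_g_scaled s (p ^ j)%N <=
       \big[Rplus/0]_(1 <= j < k.+1) (6 * q ^ j).
  apply: sum_le => j; rewrite mem_index_iota => /andP[j1 _].
  rewrite /abs_g_scaled /gfun mult_pexp // INR_expn Rpower_pow_base; last lra.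
  have hg := g_pp_bound pp j j1.
  have -> : q ^ j = (/ INR p) ^ j * Rpower (INR p) (- s) ^ j.
    rewrite -Rpow_mult_distr; congr (_ ^ j).
    rewrite /q (_ : -1 - s = - (1) + - s); last ring.
    by rewrite Rpower_plus Rpower_Ropp Rpower_1 //; lra.
  have hr : 0 <= Rpower (INR p) (- s) ^ j by apply: pow_le; left; exact: Rpower_pos.
  rewrite -Rmult_assoc; apply: Rmult_le_compat_r => //.
  by rewrite pow_inv; move: hg; rewrite /Rdiv.
rewrite -big_distrr /=.
have := geom_bound _ k hq; have : 0 <= q ^ k.+1 by apply: pow_le; lra.
lra.
Qed.

(* Comparison of sum_n n^(-1-s) with the integral of t^(-1-s). *)
Lemma Rpower_telescope_step s y : 0 < s -> 1 <= y ->
  Rpower (y + 1) (-1 - s) <= (Rpower y (- s) - Rpower (y + 1) (- s)) / s.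
Proof.
move=> s0 y1; set A := Rpower (y + 1) (- s).
have A0 : 0 < A by exact: Rpower_pos.
have e1 : Rpower (y + 1) (-1 - s) = A / (y + 1).
  by rewrite (_ : -1 - s = - s - 1); [apply: Rpower_sub1; lra | ring].
have e2 : Rpower y (- s) = A * exp (s * (ln (y + 1) - ln y)).
  by rewrite /A /Rpower -exp_plus; congr exp; ring.
have [hl _] := ln_succ_bounds y ltac:(lra).
have hexp := exp_ineq1_le (s * (ln (y + 1) - ln y)).
have h2 : A * (s * / (y + 1)) <= A * (s * (ln (y + 1) - ln y)).
  by apply: Rmult_le_compat_l; [lra | apply: Rmult_le_compat_l; lra].
rewrite e1 e2; apply: (Rmult_le_reg_r s) => //.
have -> : (A * exp (s * (ln (y + 1) - ln y)) - A) / s * s =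
          A * exp (s * (ln (y + 1) - ln y)) - A by field; lra.
have -> : A / (y + 1) * s = A * (s * / (y + 1)) by field; lra.
nra.
Qed.

Lemma Rpower_telescope s M : 0 < s ->
  \rsum_(n <- iota 2 M) Rpower (INR n) (-1 - s) <= (1 - Rpower (INR M.+1) (- s)) / s.
Proof.
move=> s0; elim: M => [|M IH]; first by rewrite big_nil /= Rpower_1base; lra.
rewrite -[M.+1]addn1 iotaD big_cat big_seq1 /= addn1 -/(iota 2 M).
have := Rpower_telescope_step s (INR M.+1) s0 ltac:(apply: (le_INR 1); lia).
rewrite -S_INR => h.
have : (1 - Rpower (INR M.+1) (- s)) / s +
       (Rpower (INR M.+1) (- s) - Rpower (INR M.+2) (- s)) / s =
       (1 - Rpower (INR M.+2) (- s)) / s by field; lra.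
lra.
Qed.

Lemma Dsum_abs_g_bound s L : 0 < s -> (0 < L)%N ->
  Dsum (abs_g_scaled s) L <= abs_g_bound s.
Proof.
move=> s0 L0.
have DM : multiplicative (Dsum (abs_g_scaled s)).
  by apply: Dsum_mult; exact: abs_g_scaled_mult.
rewrite (mult_decomp _ _ DM L0); apply: Rle_trans.
  apply: (prod_le _ _ (fun p => exp (12 * Rpower (INR p) (-1 - s)))).
  move=> p; rewrite mem_primes => /andP[pp _]; split.
    by apply: sum_nonneg => d _; exact: abs_g_scaled_nonneg.
  by apply: Rle_trans; [exact: abs_g_local_bound | exact: exp_ineq1_le].
rewrite -exp_sum /abs_g_bound; apply: exp_le_mono; rewrite -big_distrr /=.
apply: (Rle_trans _ (12 * \rsum_(n <- iota 2 L) Rpower (INR n) (-1 - s))).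
  apply: Rmult_le_compat_l; first lra.
  apply: sum_sub_le; [exact: primes_uniq | exact: iota_uniq | |].
    move=> p; rewrite mem_primes mem_iota => /and3P[pp _ pL].
    by have := prime_gt1 pp; have := dvdn_leq L0 pL; lia.
  by move=> i _; left; exact: Rpower_pos.
have := Rpower_telescope s L s0; have := Rpower_pos (INR L.+1) (- s).
have : 0 < / s by apply: Rinv_0_lt_compat.
rewrite /Rdiv => h1 h2 h3.
have : 12 * ((1 - Rpower (INR L.+1) (- s)) * / s) <= 12 * / s by nra.
lra.
Qed.

(* Every d <= N divides N!, so the partial sums are divisor sums. *)
Lemma partial_abs_g_bound s N : 0 < s ->
  \rsum_(d <- iota 1 N) abs_g_scaled s d <= abs_g_bound s.
Proof.
move=> s0; apply: Rle_trans (Dsum_abs_g_bound s (N`!) s0 (fact_gt0 N)).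
rewrite /Dsum; apply: sum_sub_le; [exact: iota_uniq | exact: divisors_uniq | |].
  by move=> d; rewrite mem_iota -dvdn_divisors ?fact_gt0 // => h; apply: dvdn_fact; lia.
by move=> i _; exact: abs_g_scaled_nonneg.
Qed.

Definition gdiv (d : nat) : R := gfun d / INR d.

Definition dirichlet_sum (N : nat) : R :=
  \rsum_(d <- iota 1 N) gdiv d * harmonic (N %/ d).

Lemma sum_inv_betaE N : sum_inv_beta N = \rsum_(n <- iota 1 N) / beta n.
Proof. by rewrite /sum_inv_beta unlock. Qed.

Lemma inv_beta_ratio n : (0 < n)%N -> / beta n = ratio n / INR n.
Proof.
move=> n0; have h : 0 < INR n by apply: lt_0_INR; lia.
by rewrite /ratio /Rdiv Rmult_comm -Rmult_assoc Rinv_l ?Rmult_1_l //; lra.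
Qed.

Lemma divisors_filter n : (0 < n)%N ->
  perm_eq (divisors n) [seq d <- iota 1 n | d %| n].
Proof.
move=> n0; apply: uniq_perm; [exact: divisors_uniq | by rewrite filter_uniq ?iota_uniq |].
move=> d; rewrite mem_filter mem_iota -dvdn_divisors //.
apply/idP/idP => [dn|/andP[] //]; rewrite dn /=.
have := dvdn_leq n0 dn; case: d dn => [|d]; last by move=> _ /=; lia.
by rewrite dvd0n => /eqP h; rewrite h in n0.
Qed.

Lemma harmonic_quotient_step N d : (0 < d)%N ->
  gdiv d * harmonic (N.+1 %/ d) =
  gdiv d * harmonic (N %/ d) + (if d %| N.+1 then gfun d else 0) / INR N.+1.
Proof.
move=> d0; have hN := INR_S_pos N; rewrite divnS //.
case: ifP => dd; last by rewrite add0n /Rdiv Rmult_0_l; ring.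
have hd : 0 < INR d by apply: lt_0_INR; lia.
rewrite add1n harmonic_S.
have -> : INR (N %/ d).+1 = INR N.+1 / INR d.
  have -> : (N %/ d).+1 = (N.+1 %/ d)%N by rewrite divnS // dd.
  by rewrite -{2}(divnK dd) mult_INR; field; lra.
by rewrite /gdiv; field; lra.
Qed.

Lemma sum_inv_beta_dirichlet N : sum_inv_beta N = dirichlet_sum N.
Proof.
rewrite sum_inv_betaE; elim: N => [|N IH]; first by rewrite /dirichlet_sum /= !big_nil.
rewrite iota_1_S big_cat big_seq1 IH inv_beta_ratio // ratio_Dsum //.
rewrite /Dsum (perm_big _ (divisors_filter _ _)) // big_filter big_mkcond.
rewrite /dirichlet_sum iota_1_S !big_cat !big_seq1 divnn ltn0Sn dvdnn harmonic_1.
have step d : d \in iota 1 N -> gdiv d * harmonic (N.+1 %/ d) =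
  gdiv d * harmonic (N %/ d) + (if d %| N.+1 then gfun d else 0) / INR N.+1.
  by rewrite mem_iota => /andP[d0 _]; exact: harmonic_quotient_step.
rewrite (eq_big_seq _ step) big_split; fold_R.
have -> : \rsum_(i <- iota 1 N) ((if i %| N.+1 then gfun i else 0) / INR N.+1) =
          (\rsum_(i <- iota 1 N) (if i %| N.+1 then gfun i else 0)) / INR N.+1.
  by rewrite /Rdiv big_distrl.
by rewrite Rmult_1_r /Rdiv Rmult_plus_distr_r Rplus_assoc.
Qed.

Definition gdiv_sum (N : nat) : R := \rsum_(d <- iota 1 N) gdiv d.
Definition gdiv_log_sum (N : nat) : R := \rsum_(d <- iota 1 N) (gdiv d * ln (INR d)).

Lemma gdiv_sum_tail s : 0 < s -> s < 1 ->
  {l | Un_cv gdiv_sum l /\ forall N y, 0 < y -> y <= INR N.+1 ->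
     Rabs (l - gdiv_sum N) <= abs_g_bound s * Rpower y (- (1 - s))}.
Proof.
move=> s0 s1.
have dom d : (0 < d)%N ->
    Rabs (gdiv d) <= 1 * abs_g_scaled s d * Rpower (INR d) (- (1 - s)).
  move=> d0; have hd : 0 < INR d by apply: lt_0_INR; lia.
  rewrite /gdiv /Rdiv Rabs_mult (abs_g_scaled_inv s) // Rabs_inv Rabs_right; last lra.
  rewrite (_ : - (1 - s) = s - 1) ?Rpower_sub1 //; last ring.
  by rewrite /Rdiv; right; ring.
have [l [cv tail]] := convergent_with_tail gdiv (abs_g_scaled s) (abs_g_bound s) 1 (1 - s)
  ltac:(lra) ltac:(lra) (abs_g_scaled_nonneg s) (fun N => partial_abs_g_bound s N s0) dom.
exists l; split; first exact: cv.
by move=> N y y0 yN; rewrite -[abs_g_bound s]Rmult_1_l; exact: tail.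
Qed.

Lemma gdiv_log_sum_tail s : 0 < s -> s < 1/2 ->
  {l | Un_cv gdiv_log_sum l /\ forall N y, 0 < y -> y <= INR N.+1 ->
     Rabs (l - gdiv_log_sum N) <= / s * abs_g_bound s * Rpower y (- (1 - 2 * s))}.
Proof.
move=> s0 s1; have is0 : 0 < / s by apply: Rinv_0_lt_compat.
apply: (convergent_with_tail _ (abs_g_scaled s)); try lra.
- exact: abs_g_scaled_nonneg.
- by move=> N; exact: partial_abs_g_bound.
move=> d d0; have hd : 1 <= INR d by apply: (le_INR 1); lia.
have lnd : 0 <= ln (INR d) by rewrite -ln_1; apply: ln_le_mono; lra.
have lnb := ln_le_Rpower s (INR d) s0 ltac:(lra).
rewrite /gdiv /Rdiv !Rabs_mult (abs_g_scaled_inv s) // Rabs_inv.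
rewrite (Rabs_right (INR d)) ?(Rabs_right (ln (INR d))); try lra.
have e : Rpower (INR d) (- (1 - 2 * s)) = Rpower (INR d) s * Rpower (INR d) s * / INR d.
  by rewrite (_ : - (1 - 2 * s) = s + s - 1) ?Rpower_sub1 ?Rpower_plus //; lra.
rewrite e; have hE := abs_g_scaled_nonneg s d; have hp := Rpower_pos (INR d) s.
have hi : 0 < / INR d by apply: Rinv_0_lt_compat; lra.
have h : ln (INR d) <= / s * Rpower (INR d) s by rewrite Rmult_comm.
apply: Rle_trans (_ : abs_g_scaled s d * Rpower (INR d) s * / INR d *
                      (/ s * Rpower (INR d) s) <= _).
  by apply: Rmult_le_compat_l => //; apply: Rmult_le_pos; [apply: Rmult_le_pos|]; lra.
by right; ring.
Qed.

Section Asymptotics.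
Variable gamma : R.
Hypothesis harmonic_gamma :
  forall M, (0 < M)%N -> Rabs (harmonic M - ln (INR M) - gamma) <= / INR M.

Lemma harmonic_quotient_approx x N d :
  INR N <= x < INR N + 1 -> (0 < d)%N -> (d <= N)%N ->
  Rabs (harmonic (N %/ d) - (ln x - ln (INR d) + gamma)) <= 4 * INR d / x.
Proof.
move=> [xl xu] d0 dN; set M := (N %/ d)%N.
have M0 : (0 < M)%N by rewrite /M divn_gt0.
have hM : 1 <= INR M by apply: (le_INR 1); lia.
have hd : 1 <= INR d by apply: (le_INR 1); lia.
have x1 : 1 <= x by apply: Rle_trans xl; apply: (le_INR 1); lia.
have h1 : INR M * INR d <= x.
  by rewrite -mult_INR; apply: Rle_trans xl; apply: le_INR; apply/leP; exact: leq_divM.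
have h2 : x < (INR M + 1) * INR d.
  apply: Rlt_le_trans xu _; rewrite -!S_INR -mult_INR; apply: le_INR.
  by have := ltn_ceil N d0; rewrite -/M; lia.
have ex : ln x - ln (INR d) = ln (x / INR d).
  by rewrite /Rdiv ln_mult ?ln_Rinv //; try lra; apply: Rinv_0_lt_compat; lra.
have q1 : INR M <= x / INR d.
  by apply: (Rmult_le_reg_r (INR d)); [lra | rewrite /Rdiv Rmult_assoc Rinv_l; lra].
have q2 : x / INR d <= INR M + 1.
  by apply: (Rmult_le_reg_r (INR d)); [lra | rewrite /Rdiv Rmult_assoc Rinv_l; lra].
have l1 : ln (INR M) <= ln (x / INR d) by apply: ln_le_mono; lra.
have l2 : ln (x / INR d) <= ln (INR M + 1) by apply: ln_le_mono; lra.
have [_ l3] := ln_succ_bounds (INR M) ltac:(lra).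
have l4 : / INR M <= 2 * INR d / x.
  apply: (Rmult_le_reg_r (INR M * x)); first nra.
  have -> : / INR M * (INR M * x) = x by field; lra.
  have -> : 2 * INR d / x * (INR M * x) = 2 * INR M * INR d by field; lra.
  nra.
have /Rabs_le_inv h := harmonic_gamma M M0; rewrite ex.
by apply: Rabs_le; lra.
Qed.

Lemma dirichlet_term_bound s x N d : 0 < s ->
  INR N <= x < INR N + 1 -> (0 < d)%N -> (d <= N)%N ->
  Rabs (gdiv d * harmonic (N %/ d) -
        ((ln x + gamma) * gdiv d - gdiv d * ln (INR d)))
    <= 4 * Rpower x (s - 1) * abs_g_scaled s d.
Proof.
move=> s0 hx d0 dN; have hd : 1 <= INR d by apply: (le_INR 1); lia.
have dx : INR d <= x by case: hx => xl _; apply: Rle_trans xl; apply: le_INR; lia.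
have x0 : 0 < x by lra.
have -> : gdiv d * harmonic (N %/ d) - ((ln x + gamma) * gdiv d - gdiv d * ln (INR d)) =
          gdiv d * (harmonic (N %/ d) - (ln x - ln (INR d) + gamma)) by ring.
have ha := harmonic_quotient_approx x N d hx d0 dN.
have hds : Rpower (INR d) s <= Rpower x s by apply: Rle_Rpower_l; lra.
have hE := abs_g_scaled_nonneg s d; have hpos := Rpower_pos (INR d) s.
rewrite Rabs_mult /gdiv /Rdiv Rabs_mult Rabs_inv (Rabs_right (INR d)); last lra.
rewrite (abs_g_scaled_inv s) // Rpower_sub1 //.
apply: Rle_trans (_ : abs_g_scaled s d * Rpower (INR d) s * / INR d *
                      (4 * INR d * / x) <= _).
  by apply: Rmult_le_compat_l => //; apply: Rmult_le_pos;
     [apply: Rmult_le_pos | left; apply: Rinv_0_lt_compat]; lra.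
have -> : abs_g_scaled s d * Rpower (INR d) s * / INR d * (4 * INR d * / x) =
          4 * / x * abs_g_scaled s d * Rpower (INR d) s by field; lra.
have hix : 0 <= 4 * / x * abs_g_scaled s d.
  by apply: Rmult_le_pos => //; apply: Rmult_le_pos; [lra | left; apply: Rinv_0_lt_compat].
by have := Rmult_le_compat_l _ _ _ hix hds; rewrite /Rdiv; lra.
Qed.

Lemma sum_inv_beta_approx s x N : 0 < s -> INR N <= x < INR N + 1 ->
  Rabs (sum_inv_beta N - ((ln x + gamma) * gdiv_sum N - gdiv_log_sum N))
    <= 4 * abs_g_bound s * Rpower x (s - 1).
Proof.
move=> s0 hx.
rewrite sum_inv_beta_dirichlet /dirichlet_sum /gdiv_sum /gdiv_log_sum big_distrr -!sum_sub.
apply: Rle_trans; first exact: sum_abs.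
apply: Rle_trans (_ : \rsum_(d <- iota 1 N) (4 * Rpower x (s - 1) * abs_g_scaled s d) <= _).
  apply: sum_le => d; rewrite mem_iota => /andP[d1 dN].
  by apply: dirichlet_term_bound => //; lia.
rewrite -big_distrr /=; have := partial_abs_g_bound s N s0.
by have := Rpower_pos x (s - 1); nra.
Qed.

Lemma ln_gamma_bound s x : 0 < s -> 1 <= x ->
  Rabs (ln x + gamma) <= (/ s + Rabs gamma) * Rpower x s.
Proof.
move=> s0 x1; have lx : 0 <= ln x by rewrite -ln_1; apply: ln_le_mono; lra.
have lxb := ln_le_Rpower s x s0 ltac:(lra).
have ps1 := Rpower_ge1 x s x1 ltac:(lra).
apply: Rle_trans; first exact: Rabs_triang.
rewrite Rabs_right; last lra.
have : Rabs gamma <= Rabs gamma * Rpower x s by have := Rabs_pos gamma; nra.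
have : ln x <= / s * Rpower x s by rewrite Rmult_comm.
lra.
Qed.

Section WithLimits.
Variables (K1 La : R).
Hypotheses (K1_limit : Un_cv gdiv_sum K1) (La_limit : Un_cv gdiv_log_sum La).

Lemma K1_tail s N y : 0 < s -> s < 1 -> 0 < y -> y <= INR N.+1 ->
  Rabs (K1 - gdiv_sum N) <= abs_g_bound s * Rpower y (- (1 - s)).
Proof.
move=> s0 s1 y0 yN; have [l [cvl bl]] := gdiv_sum_tail s s0 s1.
by rewrite -(UL_sequence _ _ _ cvl K1_limit); exact: bl.
Qed.

Lemma La_tail s N y : 0 < s -> s < 1/2 -> 0 < y -> y <= INR N.+1 ->
  Rabs (La - gdiv_log_sum N) <= / s * abs_g_bound s * Rpower y (- (1 - 2 * s)).
Proof.
move=> s0 s1 y0 yN; have [l [cvl bl]] := gdiv_log_sum_tail s s0 s1.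
by rewrite -(UL_sequence _ _ _ cvl La_limit); exact: bl.
Qed.

(* For fixed s in (0, 1/2) the error is O(x^(2s-1)): split it as
     (A(N) - (log x + gamma) T(N) + L(N)) + (log x + gamma)(T(N) - K1)
       + (La - L(N)). *)
Lemma sum_inv_beta_error s x N : 0 < s -> s < 1/2 ->
  1 <= x -> INR N <= x < INR N + 1 ->
  Rabs (sum_inv_beta N - K1 * ln x - (gamma * K1 - La)) <=
    (4 + / s + Rabs gamma + / s) * abs_g_bound s * Rpower x (- (1 - 2 * s)).
Proof.
move=> s0 s1 x1 hx; have x0 : 0 < x by lra.
have xN : x <= INR N.+1 by rewrite S_INR; lra.
set B := abs_g_bound s; have B0 : 0 <= B by left; exact: exp_pos.
have hD := sum_inv_beta_approx s x N s0 hx.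
have hT := K1_tail s N x s0 ltac:(lra) x0 xN.
have hL := La_tail s N x s0 s1 x0 xN.
rewrite -/B in hD hT hL.
have hlg := ln_gamma_bound s x s0 x1.
have pw1 : Rpower x (s - 1) <= Rpower x (- (1 - 2 * s)) by apply: Rle_Rpower; lra.
have pw3 : Rpower x s * Rpower x (- (1 - s)) = Rpower x (- (1 - 2 * s)).
  by rewrite -Rpower_plus; congr Rpower; ring.
have hTT : Rabs ((ln x + gamma) * (gdiv_sum N - K1)) <=
           (/ s + Rabs gamma) * B * Rpower x (- (1 - 2 * s)).
  rewrite Rabs_mult Rabs_minus_sym -pw3.
  apply: Rle_trans (_ : ((/ s + Rabs gamma) * Rpower x s) *
                        (B * Rpower x (- (1 - s))) <= _); last by right; ring.
  by apply: Rmult_le_compat => //; exact: Rabs_pos.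
have hDD : 4 * B * Rpower x (s - 1) <= 4 * B * Rpower x (- (1 - 2 * s)).
  by apply: Rmult_le_compat_l; lra.
have -> : sum_inv_beta N - K1 * ln x - (gamma * K1 - La) =
  (sum_inv_beta N - ((ln x + gamma) * gdiv_sum N - gdiv_log_sum N)) +
  (ln x + gamma) * (gdiv_sum N - K1) + (La - gdiv_log_sum N) by ring.
apply: Rle_trans; first exact: Rabs_triang.
apply: Rle_trans; first by apply: Rplus_le_compat_r; exact: Rabs_triang.
lra.
Qed.

Lemma asymptotic eps : 0 < eps ->
  exists C X : R, 0 < X /\
    forall (x : R) (N : nat), X <= x -> INR N <= x < INR N + 1 ->
      Rabs (sum_inv_beta N - K1 * ln x - (gamma * K1 - La)) <= C * Rpower x (-1 + eps).
Proof.
move=> e0; set s := Rmin eps (1/2) / 4.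
have s0 : 0 < s by rewrite /s; apply: Rdiv_lt_0_compat; [apply: Rmin_glb_lt|]; lra.
have s1 : s <= eps / 4 by rewrite /s; have := Rmin_l eps (1/2); lra.
have s2 : s <= 1 / 8 by rewrite /s; have := Rmin_r eps (1/2); lra.
exists ((4 + / s + Rabs gamma + / s) * abs_g_bound s), 1; split => [|x N x1 hx].
  lra.
apply: Rle_trans (sum_inv_beta_error s x N s0 ltac:(lra) x1 hx) _.
apply: Rmult_le_compat_l; last by apply: Rle_Rpower; lra.
apply: Rmult_le_pos; last by left; exact: exp_pos.
have := Rabs_pos gamma; have : 0 < / s by apply: Rinv_0_lt_compat.
lra.
Qed.

End WithLimits.

End Asymptotics.

Definition local_series (p K : nat) : R := sum_f_R0 (fun a => / beta (p ^ a.+1)%N) K.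

Lemma local_series_bound p K : prime p -> 0 <= local_series p K <= 3 - 3 * (/ 2) ^ K.+1.
Proof.
move=> pp; rewrite /local_series; elim: K => [|K IH].
  by have := inv_beta_pexp_bound _ 0 pp; rewrite /=; lra.
have := inv_beta_pexp_bound _ K.+1 pp; rewrite /= in IH *; move=> h.
have : 0 < (/ 2) ^ K by apply: pow_lt; lra.
lra.
Qed.

Lemma local_series_cv p : prime p -> {l | Un_cv (local_series p) l}.
Proof.
move=> pp; apply: growing_cv.
  by move=> n; rewrite /local_series /=; have := inv_beta_pexp_bound _ n.+1 pp; lra.
exists 3 => x [i ->]; have := local_series_bound _ i pp.
have : 0 < (/ 2) ^ i.+1 by apply: pow_lt; lra.
lra.
Qed.

(* The sum of the local series, defined for every prime (and, to keep the
   definition total, set to the value at 2 elsewhere). *)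
Definition prime_or_2 (p : nat) : nat := if prime p then p else 2%N.

Lemma prime_or_2_prime p : prime (prime_or_2 p).
Proof. by rewrite /prime_or_2; case: ifP. Qed.

Definition local_sum (p : nat) : R :=
  proj1_sig (local_series_cv _ (prime_or_2_prime p)).

Lemma local_sum_spec p : prime p ->
  infinite_sum (fun a : nat => / beta (expn p a.+1)) (local_sum p).
Proof.
move=> pp; have h := proj2_sig (local_series_cv _ (prime_or_2_prime p)).
by rewrite -/(local_sum p) /prime_or_2 pp in h.
Qed.

Definition local_gdiv_sum (p K : nat) : R := \big[Rplus/0]_(0 <= j < K.+1) gdiv (p ^ j)%N.

Lemma local_gdiv_sumE p K : prime p ->
  local_gdiv_sum p K.+1 =
  (1 - / INR p) * (1 + local_series p K) + / INR p * / beta (p ^ K.+1)%N.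
Proof.
move=> pp; have P2 := prime_ge2 pp.
have gdiv_pexp j : (0 < j)%N -> gdiv (p ^ j)%N = g_pp p j / INR p ^ j.
  by move=> j0; rewrite /gdiv /gfun mult_pexp // INR_expn.
elim: K => [|K IH].
  rewrite /local_gdiv_sum big_nat_recr //= big_nat1; fold_R.
  have -> : gdiv (p ^ 0)%N = 1 by rewrite expn0 /gdiv /gfun /mult /= big_nil; field.
  rewrite (gdiv_pexp 1%N) // /local_series /= inv_beta_pexp // /g_pp /= ratio_pp0 //.
  by field; lra.
rewrite /local_gdiv_sum big_nat_recr //=; fold_R.
rewrite -/(local_gdiv_sum p K.+1) IH (gdiv_pexp K.+2) //.
rewrite /local_series /= -/(local_series p K) !inv_beta_pexp // /g_pp /=.
have : 0 < INR p ^ K by apply: pow_lt; lra.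
by move=> h; field; lra.
Qed.

Lemma local_remainder_cv p : prime p ->
  Un_cv (fun K => / INR p * / beta (p ^ K.+1)%N) 0.
Proof.
move=> pp; have P2 := prime_ge2 pp.
have ip : 0 < / INR p <= 1 / 2.
  split; first by apply: Rinv_0_lt_compat; lra.
  by have := Rinv_le_contravar 2 (INR p) ltac:(lra) P2; lra.
move=> e e0; have [N hN] := pow_lt_1_zero (/ 2) ltac:(rewrite Rabs_right; lra) (e / 3)
  ltac:(lra).
exists N => n nN; rewrite /R_dist Rminus_0_r.
have := hN n nN; rewrite Rabs_right; last by apply: Rle_ge; apply: pow_le; lra.
have tb := inv_beta_pexp_bound _ n pp.
rewrite Rabs_right; last by apply: Rle_ge; apply: Rmult_le_pos; lra.
have : 0 <= (/ 2) ^ n by apply: pow_le; lra.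
rewrite /= in tb; nra.
Qed.

Lemma local_gdiv_sum_cv p : prime p ->
  Un_cv (fun K => local_gdiv_sum p K.+1) ((1 - / INR p) * (1 + local_sum p)).
Proof.
move=> pp; apply: cv_ext; first by move=> n; symmetry; exact: local_gdiv_sumE.
rewrite -(Rplus_0_r ((1 - / INR p) * (1 + local_sum p))).
apply: CV_plus; last exact: local_remainder_cv.
apply: CV_mult; first exact: cv_const.
by apply: CV_plus; [exact: cv_const | exact: local_sum_spec].
Qed.

(* For N <= K, the number
   L = prod_{p < N} p^K is divisible by every d < N, so the divisor sum of
   g(d)/d over L, which is the product of the truncated local factors,
   differs from sum_{d < N} g(d)/d only by terms with d >= N; these are
   O(N^(-1/2)) by absolute convergence. *)
Definition primes_below (N : nat) : seq nat := [seq p <- iota 0 N | prime p].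
Definition smooth_modulus (K N : nat) : nat := \prod_(p <- primes_below N) p ^ K.

Lemma gdiv_mult : multiplicative gdiv.
Proof.
have inv_mult : multiplicative (fun d => / INR d).
  by split=> [|m n _]; rewrite ?Rinv_1 // mult_INR Rinv_mult.
exact: mult_mul (mult_multiplicative g_pp) inv_mult.
Qed.

Lemma primes_below_uniq N : uniq (primes_below N).
Proof. by rewrite /primes_below filter_uniq // iota_uniq. Qed.

Lemma primes_below_prime N : all prime (primes_below N).
Proof. by apply/allP => p; rewrite mem_filter => /andP[]. Qed.

Lemma euler_prodE f N : partial_euler_prod f N =
  \rprod_(p <- primes_below N) ((1 - / INR p) * (1 + f p)).
Proof. by rewrite /partial_euler_prod unlock. Qed.

Lemma Dsum_smooth_modulus K N :
  Dsum gdiv (smooth_modulus K N) = \rprod_(p <- primes_below N) local_gdiv_sum p K.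
Proof.
rewrite /smooth_modulus (mult_prod_pp _ _ (fun _ => K)).
- by apply: eq_big_seq => p; rewrite mem_filter => /andP[pp _]; rewrite Dsum_pexp.
- by apply: Dsum_mult; exact: gdiv_mult.
- exact: primes_below_uniq.
- exact: primes_below_prime.
Qed.

Lemma smooth_modulus_gt0 K N : (0 < smooth_modulus K N)%N.
Proof.
rewrite /smooth_modulus; elim: (primes_below N) (primes_below_prime N) => [|p s IH] /=.
  by rewrite big_nil.
by move=> /andP[pp ps]; rewrite big_cons muln_gt0 expn_gt0 prime_gt0 //=; exact: IH.
Qed.

Lemma dvdn_smooth_modulus d K N : (0 < d)%N -> (d < N)%N -> (N <= K)%N ->
  d %| smooth_modulus K N.
Proof.
move=> d0 dN NK; apply/(dvdn_partP _ d0) => p; rewrite mem_primes => /and3P[pp _ pd].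
rewrite p_part.
have pin : p \in primes_below N.
  by rewrite mem_filter pp mem_iota /=; have := dvdn_leq d0 pd; lia.
have lp : (logn p d <= K)%N.
  have h1 := ltn_expl (logn p d) (prime_gt1 pp).
  by have h2 := dvdn_leq d0 (pfactor_dvdnn p d); lia.
apply: dvdn_trans (dvdn_exp2l p lp) _.
by rewrite /smooth_modulus (big_rem _ pin) /= dvdn_mulr.
Qed.

Lemma abs_gdiv_large d N : (0 < N)%N -> (N <= d)%N ->
  Rabs (gdiv d) <= abs_g_scaled (1/2) d * Rpower (INR N) (- (1/2)).
Proof.
move=> N0 Nd; have hd : 0 < INR d by apply: lt_0_INR; lia.
rewrite /gdiv {1}/Rdiv Rabs_mult (abs_g_scaled_inv (1/2)); last lia.
rewrite Rabs_inv Rabs_right; last lra.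
have e : Rpower (INR d) (1/2) * / INR d = Rpower (INR d) (- (1/2)).
  by rewrite (_ : - (1/2) = 1/2 - 1) ?Rpower_sub1 //; lra.
rewrite Rmult_assoc e.
apply: Rmult_le_compat_l; first exact: abs_g_scaled_nonneg.
by apply: Rpower_neg_anti; [lra | apply: lt_0_INR; lia | apply: le_INR; lia].
Qed.

Lemma Dsum_smooth_modulus_close K N : (0 < N)%N -> (N <= K)%N ->
  Rabs (Dsum gdiv (smooth_modulus K N) - gdiv_sum N.-1)
    <= abs_g_bound (1/2) * Rpower (INR N) (- (1/2)).
Proof.
move=> N0 NK; set L := smooth_modulus K N.
have L0 : (0 < L)%N := smooth_modulus_gt0 K N.
have pe : perm_eq (divisors L)
   ([seq d <- divisors L | (d < N)%N] ++ [seq d <- divisors L | ~~ (d < N)%N]).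
  by rewrite perm_sym perm_filterC.
have pe2 : perm_eq [seq d <- divisors L | (d < N)%N] (iota 1 N.-1).
  apply: uniq_perm; [by rewrite filter_uniq // divisors_uniq | exact: iota_uniq |].
  move=> d; rewrite mem_filter mem_iota -dvdn_divisors //.
  apply/idP/idP => [/andP[dN dL] | /andP[d1 dN]].
    by have := dvdn_gt0 L0 dL; lia.
  by rewrite (_ : (d < N)%N) /=; [apply: dvdn_smooth_modulus | ]; lia.
rewrite /Dsum (perm_big _ pe) big_cat (perm_big _ pe2) /gdiv_sum; fold_R.
have -> : forall a b : R, a + b - a = b by move=> a b; ring.
apply: Rle_trans; first exact: sum_abs.
apply: Rle_trans.
  apply: (sum_le _ _ (fun d => abs_g_scaled (1/2) d * Rpower (INR N) (- (1/2)))) => d.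
  by rewrite mem_filter -leqNgt => /andP[Nd _]; exact: abs_gdiv_large.
rewrite -big_distrl; apply: Rmult_le_compat_r; first by left; exact: Rpower_pos.
apply: Rle_trans (Dsum_abs_g_bound (1/2) L ltac:(lra) L0).
apply: sum_sub_le; [by rewrite filter_uniq // divisors_uniq | exact: divisors_uniq | |].
  by move=> d; rewrite mem_filter => /andP[].
by move=> i _; exact: abs_g_scaled_nonneg.
Qed.

(* Letting K -> oo: the partial Euler product over p < N is within
   O(N^(-1/2)) of sum_{d < N} g(d)/d. *)
Lemma euler_prod_close N : (0 < N)%N ->
  Rabs (partial_euler_prod local_sum N - gdiv_sum N.-1)
    <= abs_g_bound (1/2) * Rpower (INR N) (- (1/2)).
Proof.
move=> N0.
have cv : Un_cv (fun K => Dsum gdiv (smooth_modulus K.+1 N)) (partial_euler_prod local_sum N).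
  rewrite euler_prodE; apply: cv_ext; first by move=> K; rewrite Dsum_smooth_modulus.
  apply: (prod_cv _ (fun p K => local_gdiv_sum p K.+1)) => p.
  by rewrite mem_filter => /andP[pp _]; exact: local_gdiv_sum_cv.
apply: (lim_abs_le _ _ _ _ N cv) => K NK.
by apply: Dsum_smooth_modulus_close => //; lia.
Qed.

Lemma euler_prod_cv K1 : Un_cv gdiv_sum K1 -> Un_cv (partial_euler_prod local_sum) K1.
Proof.
move=> cvT eps e0; set B := abs_g_bound (1/2).
have B0 : 0 < B by exact: exp_pos.
have [N1 h1] := cvT (eps / 2) ltac:(lra).
have [N2 h2] := Rpower_small (1/2) (eps / (2 * B)) ltac:(lra)
   ltac:(apply: Rdiv_lt_0_compat; lra).
exists (maxn N1 N2).+1 => n /leP nN.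
have := euler_prod_close n ltac:(lia); rewrite -/B.
have := h1 n.-1 ltac:(apply/leP; lia).
have := h2 n.-1 ltac:(lia).
rewrite prednK; last lia.
rewrite /R_dist => ha hb hc.
have : B * Rpower (INR n) (- (1/2)) < B * (eps / (2 * B)) by apply: Rmult_lt_compat_l.
have -> : B * (eps / (2 * B)) = eps / 2 by field; lra.
have := Rabs_triang (partial_euler_prod local_sum n - gdiv_sum n.-1) (gdiv_sum n.-1 - K1).
have -> : partial_euler_prod local_sum n - gdiv_sum n.-1 + (gdiv_sum n.-1 - K1) =
          partial_euler_prod local_sum n - K1 by ring.
lra.
Qed.

Theorem mainTheorem5 :
  exists K1 K2 : R,
    (* K1 = prod_p (1 - 1/p) (1 + sum_{a>=1} 1/beta(p^a)) *)
    (exists f : nat -> R,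
        (forall p : nat, prime p ->
           infinite_sum (fun a : nat => / beta (expn p a.+1)) (f p)) /\
        Un_cv (partial_euler_prod f) K1) /\
    (* sum_{n <= x} 1/beta(n) = K1 log x + K2 + O(x^{-1+eps}) *)
    (forall eps : R, 0 < eps ->
       exists C X : R, 0 < X /\
         forall (x : R) (N : nat), X <= x -> INR N <= x < INR N + 1 ->
           Rabs (sum_inv_beta N - K1 * ln x - K2) <= C * Rpower x (-1 + eps)).
Proof.
have [K1 [cvT _]] := gdiv_sum_tail (1/2) ltac:(lra) ltac:(lra).
have [La [cvL _]] := gdiv_log_sum_tail (1/4) ltac:(lra) ltac:(lra).
have [gamma harmonic_gamma] := euler_gamma.
exists K1, (gamma * K1 - La); split.
  by exists local_sum; split; [exact: local_sum_spec | exact: euler_prod_cv].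
exact: asymptotic _ harmonic_gamma _ _ cvT cvL.
Qed.
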